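(* Let $\mathrm{UB}(m,k):=m(m-1)+mk$. There exists a parameter-free robust algorithm for the Discriminative Feature Feedback protocol described in the context (i.e., one that receives no input parameters) such that, for every $m,k$ and every input stream that is consistent with some representation of size $m$ with at most $k$ exceptions, the algorithm makes at most \[32\,\mathrm{UB}(m,k)\log^2\big(8\,\mathrm{UB}(m,k)\big) = \tilde{O}(m^2+mk)\] mistakes.
   Context: Setting. Let $\mathcal{X}$ be a domain of examples, $\mathcal{Y}$ a finite set of labels, and $\Phi$ a (possibly infinite, not necessarily known to the learner) set of binary features $\phi:\mathcal{X}\to\{\texttt{true},\texttt{false}\}$, closed under negation. A representation of size $m$ is a family $\mathcal{G}=\{G_1,\dots,G_m\}$ of subsets (components) of $\mathcal{X}$ with $\mathcal{X}=\bigcup_i G_i$; each component $G$ has a label $\ell(G)\in\mathcal{Y}$; for each $x$ a fixed component $G(x)\ni x$ is chosen, and the target concept is $c^*(x)=\ell(G(x))$. For any two components $G_i,G_j$ with $\ell(G_i)\neq\ell(G_j)$ there is a discriminative feature $\phi(G_i,G_j)\in\Phi$ true on every $x\in G_i$ and false on every $x\in G_j$, with $\phi(G_j,G_i)=\neg\phi(G_i,G_j)$. Protocol. The learner first receives an example $x_0$ with its label $y_0$. Then in each round: an example $x_t$ arrives; the learner predicts a label $\hat y_t$ together with an explanation $\hat x_t$, an example previously observed with label $\hat y_t$; if the prediction is correct no feedback is given; if it is incorrect (a mistake), the teacher provides $y_t=c^*(x_t)$ and the feature $\phi(G(x_t),G(\hat x_t))$. An example is an exception if the teacher's feedback on it is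 inconsistent with the representation and the protocol. The stream is consistent with a representation of size $m$ with at most $k$ exceptions if some such representation exists for which all feedback conforms to the protocol except on at most $k$ examples; the stream is otherwise arbitrary. *)

From mathcomp Require Import all_boot.
From Stdlib Require Import Reals.

Set Implicit Arguments.
Unset Strict Implicit.
Unset Printing Implicit Defensive.

Section DFF.
Variables (X : Type) (Y : finType).

Definition feature := X -> bool.

Definition closed_neg (Phi : feature -> Prop) : Prop :=
  forall f, Phi f -> Phi (fun x => ~~ f x).

(** What the learner sees about a past round t >= 1:
    the example x_t, its (now known) label, and the feature given as
    feedback (Some phi iff the round was a mistake). On a correct round
    the known label is the learner's own prediction; on a mistake it is
    the label supplied by the teacher. *)
Definition history := seq (X * Y * option feature).

(** A (deterministic, parameter-free) learner: given the initial labelled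
    example (x0, y0), the history of past rounds and the current example,
    it outputs a predicted label and the index of the explanation among the
    observed examples (index 0 = x0, index t = example of round t). *)
Definition learner := X -> Y -> history -> X -> Y * nat.

(** A round of the input stream: the example x_t, the teacher's label y_t
    for it, and the teacher's feature response as a function of the
    explanation example chosen by the learner (the stream is arbitrary). *)
Record srnd := SRnd { s_x : X; s_y : Y; s_phi : X -> feature }.

Record entry := Entry {
  e_x : X;
  e_y : Y;
  e_pred : Y;
  e_idx : nat;
  e_expl : X;
  e_fb : option feature
}.

Definition is_mistake (e : entry) : bool := e_pred e != e_y e.

Fixpoint run_aux (A : learner) (x0 : X) (y0 : Y) (h : history)
    (s : seq srnd) : seq entry :=
  match s with
  | [::] => [::]
  | r :: s' =>
      let p := A x0 y0 h (s_x r) in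
      let obs := (x0, y0) :: [seq (z.1.1, z.1.2) | z <- h] in
      let xh := (nth (x0, y0) obs p.2).1 in
      let fb := if p.1 != s_y r then Some (s_phi r xh) else None in
      Entry (s_x r) (s_y r) p.1 p.2 xh fb
        :: run_aux A x0 y0 (rcons h (s_x r, s_y r, fb)) s'
  end.

Definition run (A : learner) (x0 : X) (y0 : Y) (s : seq srnd) : seq entry :=
  run_aux A x0 y0 [::] s.

Definition observed (x0 : X) (y0 : Y) (tr : seq entry) (t : nat) : seq (X * Y) :=
  (x0, y0) :: [seq (e_x e, e_y e) | e <- take t tr].

Definition valid_run (x0 : X) (y0 : Y) (tr : seq entry) : Prop :=
  forall t, t < size tr ->
    let e := nth (Entry x0 y0 y0 0 x0 None) tr t in
    let obs := observed x0 y0 tr t in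
    e_idx e < size obs /\ nth (x0, y0) obs (e_idx e) = (e_expl e, e_pred e).

Definition num_mistakes (tr : seq entry) : nat := count is_mistake tr.

(** A representation of size m over the feature set Phi: components
    comp i (i < m), labels lab i, the fixed component G x containing x, and
    discriminative features phi i j for pairs with distinct labels. *)
Definition is_rep (Phi : feature -> Prop) (m : nat) (comp : 'I_m -> X -> Prop)
    (lab : 'I_m -> Y) (G : X -> 'I_m) (phi : 'I_m -> 'I_m -> feature) : Prop :=
  (forall x, comp (G x) x) /\
  (forall i j, lab i != lab j ->
     [/\ Phi (phi i j),
         (forall x, comp i x -> phi i j x = true),
         (forall x, comp j x -> phi i j x = false) &
         (forall x, phi j i x = ~~ phi i j x)]).

(** The feedback on transcript entry e conforms to the representation and
    the protocol: the teacher's label is c*(x_t) = lab (G x_t), and on a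
    mistake the feature given is phi(G(x_t), G(xhat_t)) (which requires the
    two components to have distinct labels). *)
Definition conforms (m : nat) (lab : 'I_m -> Y) (G : X -> 'I_m)
    (phi : 'I_m -> 'I_m -> feature) (e : entry) : Prop :=
  e_y e = lab (G (e_x e)) /\
  (is_mistake e ->
     lab (G (e_x e)) <> lab (G (e_expl e)) /\
     exists f, e_fb e = Some f /\
       forall z, f z = phi (G (e_x e)) (G (e_expl e)) z).

(** Positions: 0 is the initial example
    (x0,y0), position t+1 is the t-th entry of tr. *)
Definition consistent (Phi : feature -> Prop) (m k : nat) (x0 : X) (y0 : Y)
    (tr : seq entry) : Prop :=
  exists comp lab G phi, @is_rep Phi m comp lab G phi /\
  exists E : seq nat, size E <= k /\
    (0 \notin E -> y0 = lab (G x0)) /\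
    (forall t, t < size tr -> t.+1 \notin E ->
       conforms lab G phi (nth (Entry x0 y0 y0 0 x0 None) tr t)).

End DFF.

Definition UB (m k : nat) : nat := m * (m - 1) + m * k.

(** log base 2 (Stdlib's ln is 0 on nonpositive arguments). *)
Definition log2 (x : R) : R := (ln x / ln 2)%R.

Definition mistake_bound (m k : nat) : R :=
  (32 * INR (UB m k) * (log2 (8 * INR (UB m k))) ^ 2)%R.

From mathcomp Require Import all_boot zify boolp.
From Stdlib Require Import Reals Lra.

Set Implicit Arguments.
Unset Strict Implicit.
Unset Printing Implicit Defensive.

(** The learner keeps an ordered list of rules; a rule is an observed
    labelled example together with a conjunction of features.  It predicts
    with the first rule whose conjunction accepts the current example (with
    x0 if there is none).  After a mistake it adds the negation of the
    teacher's feature to that rule and, unless some rule with the correct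
    label now accepts the example, it appends the example as a new rule
    with the empty conjunction.  This learner makes O(m^2 + mk) mistakes.

    Fix a representation.  A rule excludes a component when one of its
    features is false on all of it, and is clean for a component when its
    example lies in it, it carries its label and its conjunction holds on
    all of it.  On a mistake that conforms to the representation, either
    the refined rule accepted the example and now also excludes the
    component of the example, or a rule is appended which is the first
    clean rule for that component; refining never spoils a clean rule.
    So exclusions plus rules grow at each conforming mistake, while each
    exception lets the number of rules outgrow the number of clean
    components by at most two.  With at most m exclusions per rule and m
    clean components there are at most m + 2k + 1 rules, hence at most
    k + (m + 1)(m + 2k + 1) mistakes; for m = 1 no mistake conforms, so
    there are at most k.  Both are at most 288 UB(m,k), and
    log2(8 UB) >= 3 makes this at most 32 UB log2^2(8 UB). *)

Section UpdAt.
Variable T : Type.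
Implicit Types (s : seq T) (f : T -> T).

Fixpoint upd_at p f s {struct s} : seq T :=
  if s is r :: s' then (if p is p'.+1 then r :: upd_at p' f s' else f r :: s')
  else [::].

Lemma size_upd_at p f s : size (upd_at p f s) = size s.
Proof. by elim: s p => [|r s IH] [|p] //=; rewrite IH. Qed.

Lemma upd_at_oversize p f s : size s <= p -> upd_at p f s = s.
Proof. by elim: s p => [|r s IH] [|p] //= /IH ->. Qed.

Lemma nth_upd_at_ind (P : T -> Prop) d p f s :
  (forall q, P (nth d s q)) -> (forall r, P r -> P (f r)) ->
  forall q, P (nth d (upd_at p f s) q).
Proof.
elim: s p => [|r s IH] p Ps Pf q; first exact: Ps q.
case: p q => [|p] [|q] /=;
  [exact: Pf (Ps 0) | exact: Ps q.+1 | exact: Ps 0 | exact: IH (fun q => Ps q.+1) Pf q].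
Qed.

Lemma sumn_upd_at (w : T -> nat) d p f s : p < size s ->
  sumn (map w (upd_at p f s)) + w (nth d s p) =
  sumn (map w s) + w (f (nth d s p)).
Proof.
elim: s p => [|r s IH] [|p] //= lt_p; first lia.
by have := IH p lt_p; lia.
Qed.

Lemma sumn_upd_at_mono (w : T -> nat) p f s : (forall r, w r <= w (f r)) ->
  sumn (map w s) <= sumn (map w (upd_at p f s)).
Proof.
move=> wf; elim: s p => [|r s IH] [|p] //=; first by rewrite leq_add2r.
by rewrite leq_add2l.
Qed.

Lemma has_upd_at (a : pred T) d p f s :
  (a (nth d s p) -> a (f (nth d s p))) -> has a s -> has a (upd_at p f s).
Proof.
elim: s p => [|r s IH] [|p] //= af /orP[ar|a_s].
- by rewrite af.
- by rewrite a_s orbT.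
- by rewrite ar.
- by rewrite IH ?orbT.
Qed.

End UpdAt.

Lemma count_le_predC_predI (T : Type) (a b : pred T) (s : seq T) :
  count a s <= count (predC b) s + count (fun x => a x && b x) s.
Proof. by elim: s => //= x s IH; case: (a x) (b x) => [] [] /=; lia. Qed.

Lemma count_le_positions (T : Type) (a : pred T) (d : T) (s : seq T) (E : seq nat) :
  (forall t, t < size s -> a (nth d s t) -> t.+1 \in E) -> count a s <= size E.
Proof.
move=> a_E; rewrite -(mkseq_nth d s) /mkseq count_map -size_filter.
rewrite -(size_map succn); apply: uniq_leq_size.
  by rewrite map_inj_uniq ?filter_uniq ?iota_uniq //; exact: succn_inj.
move=> i /mapP[t]; rewrite mem_filter mem_iota /= => /andP[a_t lt_t] ->.
exact: a_E.
Qed.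

Lemma UB_dominates (m k : nat) : 1 < m -> k + m.+1 * (m + 2 * k + 1) <= 288 * UB m k.
Proof. by rewrite /UB => lt1m; nia. Qed.

Section Learner.
Variables (X : Type) (Y : finType).

(** [r_i] is the index of [(r_x, r_y)] among the observed examples; it is
    the explanation given when the rule fires. *)
Record rule := Rule { r_x : X; r_y : Y; r_i : nat; r_F : seq (feature X) }.

Definition accepts (r : rule) (x : X) : bool := all (fun g => g x) (r_F r).

Definition refine (g : feature X) (r : rule) : rule :=
  Rule (r_x r) (r_y r) (r_i r) (g :: r_F r).

Lemma accepts_refine g r x : accepts (refine g r) x = g x && accepts r x.
Proof. by []. Qed.

Definition chosen (d : rule) (st : seq rule) (x : X) : rule :=
  nth d st (find (accepts^~ x) st).

Definition update (st : seq rule) (n : nat) (x : X) (y : Y)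
    (fb : option (feature X)) : seq rule :=
  if fb is Some f then
    let st1 := upd_at (find (accepts^~ x) st) (refine (fun z => ~~ f z)) st in
    if has (fun r => (r_y r == y) && accepts r x) st1 then st1
    else rcons st1 (Rule x y n [::])
  else st.

Fixpoint replay (st : seq rule) (n : nat) (h : history X Y) : seq rule :=
  if h is (x, y, fb) :: h' then replay (update st n x y fb) n.+1 h' else st.

Definition rule0 (x0 : X) (y0 : Y) : rule := Rule x0 y0 0 [::].

Definition rules (x0 : X) (y0 : Y) (h : history X Y) : seq rule :=
  replay [:: rule0 x0 y0] 1 h.

Definition dff_learner : learner X Y := fun x0 y0 h x =>
  let r := chosen (rule0 x0 y0) (rules x0 y0 h) x in (r_y r, r_i r).

Lemma replay_rcons st n h x y fb :
  replay st n (rcons h (x, y, fb)) = update (replay st n h) (n + size h) x y fb.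
Proof.
elim: h st n => [|[[x' y'] fb'] h IH] st n /=; first by rewrite addn0.
by rewrite IH addSnnS.
Qed.

Lemma size_run_aux (A : learner X Y) x0 y0 h s :
  size (run_aux A x0 y0 h s) = size s.
Proof. by elim: s h => [|r s IH] h //=; rewrite IH. Qed.

Definition hist_of (e : entry X Y) := (e_x e, e_y e, e_fb e).

Section Run.
Variables (x0 : X) (y0 : Y).

Definition obs_of (h : history X Y) : seq (X * Y) :=
  (x0, y0) :: [seq (z.1.1, z.1.2) | z <- h].

Definition rule_wf (h : history X Y) (r : rule) : Prop :=
  r_i r <= size h /\ nth (x0, y0) (obs_of h) (r_i r) = (r_x r, r_y r).

Lemma rules_rcons h x y fb :
  rules x0 y0 (rcons h (x, y, fb)) = update (rules x0 y0 h) (size h).+1 x y fb.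
Proof. exact: replay_rcons. Qed.

Lemma rule_wf_rcons h e r : rule_wf h r -> rule_wf (rcons h e) r.
Proof.
case=> le_i obs_i; split; first by rewrite size_rcons leqW.
by rewrite /obs_of map_rcons -rcons_cons nth_rcons /= size_map ltnS le_i.
Qed.

Lemma rules_wf h q : rule_wf h (nth (rule0 x0 y0) (rules x0 y0 h) q).
Proof.
elim/last_ind: h q => [|h [[x y] [f|]] IH] q; first by case: q => [|[]].
- set h' := rcons h _; rewrite rules_rcons /update.
  set st1 := upd_at _ _ _.
  have wf1 q' : rule_wf h' (nth (rule0 x0 y0) st1 q').
    by apply: nth_upd_at_ind => // q''; apply: rule_wf_rcons.
  case: ifP => _; first exact: wf1.
  rewrite nth_rcons; case: ifP => _; first exact: wf1.
  case: ifP => _ //; split; first by rewrite size_rcons.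
  by rewrite /obs_of map_rcons -rcons_cons nth_rcons /= size_map ltnn eqxx.
- by rewrite rules_rcons; apply: rule_wf_rcons.
Qed.

Definition round_entry (h : history X Y) (r : srnd X Y) : entry X Y :=
  let z := chosen (rule0 x0 y0) (rules x0 y0 h) (s_x r) in
  Entry (s_x r) (s_y r) (r_y z) (r_i z) (r_x z)
    (if r_y z != s_y r then Some (s_phi r (r_x z)) else None).

Lemma run_aux_cons h r s :
  run_aux dff_learner x0 y0 h (r :: s) =
  round_entry h r
    :: run_aux dff_learner x0 y0 (rcons h (hist_of (round_entry h r))) s.
Proof.
have [_ obs_z] := rules_wf h (find (accepts^~ (s_x r)) (rules x0 y0 h)).
by rewrite /= obs_z.
Qed.

Lemma nth_run_aux h s t : t < size s ->
  let tr := run_aux dff_learner x0 y0 h s in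
  exists r, nth (Entry x0 y0 y0 0 x0 None) tr t =
            round_entry (h ++ map hist_of (take t tr)) r.
Proof.
elim: s h t => [|r s IH] h [|t] // lt_t; rewrite run_aux_cons /=.
  by exists r; rewrite cats0.
have [r' ->] := IH (rcons h (hist_of (round_entry h r))) t lt_t.
by exists r'; rewrite cat_rcons.
Qed.

Lemma dff_learner_valid s : valid_run x0 y0 (run dff_learner x0 y0 s).
Proof.
move=> t lt_t /=.
have lt_ts : t < size s by rewrite -(size_run_aux dff_learner x0 y0 [::]).
have [r ->] := nth_run_aux [::] lt_ts.
set h := map hist_of _.
have obs_h : obs_of h = observed x0 y0 (run dff_learner x0 y0 s) t.
  by rewrite /obs_of /h -map_comp.
have [le_i obs_i] := rules_wf h (find (accepts^~ (s_x r)) (rules x0 y0 h)).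
rewrite -obs_h cat0s; split; last exact: obs_i.
by move: le_i; rewrite /h !size_map.
Qed.

Lemma run_potential (c w : entry X Y -> nat) (a b : history X Y -> nat) :
  (forall h r, let e := round_entry h r in let h' := rcons h (hist_of e) in
     c e + a h' + b h <= w e + a h + b h') ->
  forall h s,
  sumn (map c (run_aux dff_learner x0 y0 h s)) +
    a (h ++ map hist_of (run_aux dff_learner x0 y0 h s)) + b h <=
  sumn (map w (run_aux dff_learner x0 y0 h s)) + a h +
    b (h ++ map hist_of (run_aux dff_learner x0 y0 h s)).
Proof.
move=> round h s; elim: s h => [|r s IH] h; first by rewrite /= cats0; lia.
rewrite run_aux_cons /= -cat_rcons.
have := round h r; have := IH (rcons h (hist_of (round_entry h r))); rewrite /=; lia.
Qed.

End Run.
End Learner.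

Arguments Rule {X Y}.
Arguments accepts {X Y}.
Arguments dff_learner {X Y}.
Arguments hist_of {X Y}.

Section Potential.
Variables (X : Type) (Y : finType) (m : nat) (lab : 'I_m -> Y) (G : X -> 'I_m)
  (phi : 'I_m -> 'I_m -> feature X).
Hypothesis phi_sep : forall i j, lab i != lab j ->
  (forall x, G x = i -> phi i j x) /\ (forall x, G x = j -> ~~ phi i j x).

Implicit Types (r : rule X Y) (st : seq (rule X Y)) (b : 'I_m) (g : feature X) (x : X).

Definition excludes r b : bool :=
  has (fun g => `[< forall x, G x = b -> ~~ g x >]) (r_F r).

Definition clean_for b r : bool :=
  [&& G (r_x r) == b, r_y r == lab b & `[< forall x, G x = b -> accepts r x >]].

Definition weight st : nat := sumn [seq #|[set b | excludes r b]| | r <- st].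

Definition clean_comps st : {set 'I_m} := [set b | has (clean_for b) st].

Lemma weight_le st : weight st <= m * size st.
Proof.
elim: st => [|r st IH] /=; first by rewrite muln0.
by rewrite mulnS leq_add // (leq_trans (max_card _)) // card_ord.
Qed.

Lemma card_clean_le st : #|clean_comps st| <= m.
Proof. by rewrite (leq_trans (max_card _)) // card_ord. Qed.

Lemma excludes_refine g r b : excludes r b -> excludes (refine g r) b.
Proof. by rewrite /excludes /= => ->; rewrite orbT. Qed.

Lemma weight_refine p g st : weight st <= weight (upd_at p (refine g) st).
Proof.
apply: sumn_upd_at_mono => r; apply/subset_leq_card/subsetP => b.
by rewrite !inE; apply: excludes_refine.
Qed.

Lemma weight_refine_lt (d : rule X Y) p g st x :
  p < size st -> accepts (nth d st p) x -> (forall x', G x' = G x -> ~~ g x') ->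
  weight st < weight (upd_at p (refine g) st).
Proof.
move=> lt_p acc_x g_Gx.
have := sumn_upd_at (fun r => #|[set b | excludes r b]|) d (refine g) lt_p.
suff : #|[set b | excludes (nth d st p) b]| <
       #|[set b | excludes (refine g (nth d st p)) b]| by rewrite /weight; lia.
apply: proper_card; apply/properP; split.
  by apply/subsetP => b; rewrite !inE; apply: excludes_refine.
exists (G x); rewrite !inE /excludes /=; first by apply/orP; left; apply/asboolP.
rewrite -all_predC; apply: sub_all acc_x => g' g'_x.
by apply/asboolPn => /(_ x erefl); rewrite g'_x.
Qed.

Lemma clean_refine (d : rule X Y) p g st :
  (forall x, G x = G (r_x (nth d st p)) -> g x) ->
  clean_comps st \subset clean_comps (upd_at p (refine g) st).
Proof.
move=> g_z; apply/subsetP => b; rewrite !inE; apply: (has_upd_at (d := d)).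
case/and3P => /eqP Gz lab_z /asboolP acc_b; apply/and3P; split => //=.
- by rewrite Gz.
- by apply/asboolP => x Gx; rewrite accepts_refine acc_b // andbT g_z // Gx Gz.
Qed.

Lemma clean_refine_card (d : rule X Y) p g st :
  #|clean_comps st| <= #|clean_comps (upd_at p (refine g) st)|.+1.
Proof.
set z := nth d st p.
have sub :
    clean_comps st \subset clean_comps (upd_at p (refine g) st) :|: [set G (r_x z)].
  apply/subsetP => b; rewrite !inE => clean_b.
  case: (eqVneq b (G (r_x z))) => [_|neq]; first by rewrite orbT.
  rewrite (has_upd_at (d := d)) // => /and3P[/eqP Gz _ _].
  by rewrite Gz eqxx in neq.
rewrite (leq_trans (subset_leq_card sub)) // (leq_trans (leq_card_setU _ _)) //.
by rewrite cards1 addn1.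
Qed.

Lemma clean_rcons st r : clean_comps st \subset clean_comps (rcons st r).
Proof. by apply/subsetP => b; rewrite !inE has_rcons => ->; rewrite orbT. Qed.

Lemma clean_append st x n :
  ~~ has (fun r => (r_y r == lab (G x)) && accepts r x) st ->
  #|clean_comps st| < #|clean_comps (rcons st (Rule x (lab (G x)) n [::]))|.
Proof.
move=> no_acc; apply: proper_card; apply/properP; split; first exact: clean_rcons.
exists (G x); rewrite !inE ?has_rcons.
  by apply/orP; left; apply/and3P; split => //; apply/asboolP.
apply: contra no_acc; apply: sub_has => r /and3P[_ /eqP lab_r /asboolP acc_r].
by rewrite lab_r eqxx acc_r.
Qed.

Lemma weight_rcons st r : weight st <= weight (rcons st r).
Proof. by rewrite /weight map_rcons sumn_rcons leq_addr. Qed.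

Lemma update_mono st n x y fb :
  let st' := update st n x y fb in
  [/\ weight st <= weight st', size st <= size st' <= (size st).+1
     & #|clean_comps st| <= #|clean_comps st'|.+1].
Proof.
case: fb => [f|] /=; last by split; rewrite ?leqnn ?leqnSn.
set p := find _ st; set g := fun w => ~~ f w.
have w1 := weight_refine p g st.
have c1 := clean_refine_card (Rule x y n [::]) p g st.
set st1 := upd_at p (refine g) st in w1 c1 *.
have size1 : size st1 = size st by rewrite size_upd_at.
case: ifP => _; first by split; rewrite ?size1 ?leqnn ?leqnSn.
have := weight_rcons st1 (Rule x y n [::]).
have := subset_leq_card (clean_rcons st1 (Rule x y n [::])).
rewrite size_rcons size1 => cr wr; split.
- exact: leq_trans w1 wr.
- by rewrite leqnSn leqnn.
- exact: leq_trans c1 _.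
Qed.

Lemma update_conforming d st n x f :
  let z := chosen d st x in
  lab (G x) != lab (G (r_x z)) -> f =1 phi (G x) (G (r_x z)) ->
  let st' := update st n x (lab (G x)) (Some f) in
  weight st + size st < weight st' + size st' /\
  size st' + #|clean_comps st| <= #|clean_comps st'| + size st.
Proof.
move=> z lab_neq f_phi st'; have [phi_x phi_z] := phi_sep lab_neq.
rewrite /st' /update; set p := find _ st; set g := fun w => ~~ f w.
set st1 := upd_at p (refine g) st.
have clean1 : #|clean_comps st| <= #|clean_comps st1|.
  by apply/subset_leq_card/(clean_refine (d := d)) => w Gw; rewrite /g f_phi phi_z.
have size1 : size st1 = size st by rewrite size_upd_at.
have w1 : weight st <= weight st1 := weight_refine p g st.
case: ifP => [acc1 | /negbT no_acc1].
- have acc_st1 : has (accepts^~ x) st1 by apply: sub_has acc1 => r /andP[].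
  have lt_p : p < size st.
    case: ltnP => // le_p.
    by rewrite /st1 upd_at_oversize // has_find -/p ltnNge le_p in acc_st1.
  have acc_z : accepts z x by apply: (nth_find d (a := accepts^~ x)); rewrite has_find.
  have g_Gx w : G w = G x -> ~~ g w by move=> Gw; rewrite /g negbK f_phi phi_x.
  have := weight_refine_lt (d := d) lt_p acc_z g_Gx; rewrite -/st1 size1 => w_lt.
  split; lia.
- have := clean_append n no_acc1; have := weight_rcons st1 (Rule x (lab (G x)) n [::]).
  rewrite size_rcons size1; lia.
Qed.

Definition conformsb (e : entry X Y) : bool := `[< conforms lab G phi e >].

Lemma conforming_mistake_gt1 e : is_mistake e -> conformsb e -> 1 < m.
Proof.
move=> mis /asboolP[_ /(_ mis) [lab_neq _]].
rewrite ltnNge; apply/negP => le_m1; apply: lab_neq; congr lab; apply: ord_inj.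
by have := ltn_ord (G (e_x e)); have := ltn_ord (G (e_expl e)); lia.
Qed.

Lemma round_potential (x0 : X) (y0 : Y) (h : history X Y) (r : srnd X Y) :
  let e := round_entry x0 y0 h r in
  let st := rules x0 y0 h in
  let st' := rules x0 y0 (rcons h (hist_of e)) in
  (is_mistake e && conformsb e) + weight st + size st <= weight st' + size st' /\
  size st' + #|clean_comps st| <= #|clean_comps st'| + 2 * ~~ conformsb e + size st.
Proof.
move=> e st st'; rewrite /st' rules_rcons -/st.
have fb_none : ~~ is_mistake e -> e_fb e = None by rewrite /e /is_mistake /=; case: ifP.
have expl_e : e_expl e = r_x (chosen (rule0 x0 y0) st (e_x e)) by [].
clearbody e.
have [w_mono /andP[size_ge size_le] c_mono] :=
  update_mono st (size h).+1 (e_x e) (e_y e) (e_fb e).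
case conf: (conformsb e); last by rewrite andbF; split; lia.
have [y_lab conf_mis] := asboolW conf; rewrite andbT.
case mis: (is_mistake e); last by rewrite fb_none ?mis //=; split; lia.
have [lab_neq [f [-> f_phi]]] := conf_mis mis.
have lab_neq' : lab (G (e_x e)) != lab (G (e_expl e)) by apply/eqP.
rewrite expl_e in lab_neq' f_phi; rewrite y_lab.
have [] := update_conforming (size h).+1 lab_neq' f_phi; rewrite /=; split; lia.
Qed.

Lemma conforming_mistakes_lt (x0 : X) (y0 : Y) (s : seq (srnd X Y)) :
  count (fun e => is_mistake e && conformsb e) (run dff_learner x0 y0 s) <
  m.+1 * (m + 2 * count (predC conformsb) (run dff_learner x0 y0 s) + 1).
Proof.
set tr := run _ _ _ _; set K := count (predC conformsb) tr.
set hf := map hist_of tr.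
have growth := run_potential
  (c := fun e => is_mistake e && conformsb e) (w := fun=> 0) (a := fun=> 0)
  (b := fun h => weight (rules x0 y0 h) + size (rules x0 y0 h))
  (fun h sr => ltac:(have [] := round_potential x0 y0 h sr; rewrite /=; lia)) [::] s.
have balance := run_potential
  (c := fun=> 0) (w := fun e => 2 * ~~ conformsb e)
  (a := fun h => size (rules x0 y0 h)) (b := fun h => #|clean_comps (rules x0 y0 h)|)
  (fun h sr => ltac:(have [] := round_potential x0 y0 h sr; rewrite /=; lia)) [::] s.
have sum0 : sumn [seq 0 | _ <- tr] = 0 by elim: (tr).
have sum2 : sumn [seq 2 * ~~ conformsb e | e <- tr] = 2 * K.
  by rewrite /K; elim: (tr) => //= e tr' ->; rewrite mulnDr.
have size0 : size (rules x0 y0 [::]) = 1 by [].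
rewrite -/(run dff_learner x0 y0 s) -/tr -/hf cat0s size0 sumn_count sum0 in growth.
rewrite -/(run dff_learner x0 y0 s) -/tr -/hf cat0s size0 sum0 sum2 in balance.
have := weight_le (rules x0 y0 hf); have := card_clean_le (rules x0 y0 hf).
set L := size (rules x0 y0 hf) in growth balance * => C_le W_le.
have L_le : L <= m + 2 * K + 1 by lia.
by apply: leq_trans (leq_mul (leqnn m.+1) L_le); lia.
Qed.

Lemma dff_mistakes_le (x0 : X) (y0 : Y) (s : seq (srnd X Y)) (k : nat) :
  count (predC conformsb) (run dff_learner x0 y0 s) <= k ->
  num_mistakes (run dff_learner x0 y0 s) <= 288 * UB m k.
Proof.
set tr := run _ _ _ _; set K := count _ tr => K_le.
have M_le := count_le_predC_predI (@is_mistake X Y) conformsb tr.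
rewrite -/K in M_le; rewrite /num_mistakes.
have [le_m1 | lt1m] := leqP m 1.
  have m1 : m = 1 by have := ltn_ord (G x0); lia.
  have Mc0 : count (fun e => is_mistake e && conformsb e) tr = 0.
    rewrite (eq_count (a2 := pred0)) ?count_pred0 // => e /=.
    by apply/negP => /andP[mis conf]; have := conforming_mistake_gt1 mis conf; lia.
  by rewrite /UB m1; lia.
have Mc_lt := conforming_mistakes_lt x0 y0 s; rewrite -/tr -/K in Mc_lt.
have mono : m.+1 * (m + 2 * K + 1) <= m.+1 * (m + 2 * k + 1) by rewrite leq_mul2l; lia.
have := UB_dominates k lt1m; lia.
Qed.

End Potential.

Lemma log2_8_ge3 (u : R) : (1 <= u)%R -> (3 <= log2 (8 * u))%R.
Proof.
move=> u_ge1; have ln2_gt0 : (0 < ln 2)%R by have := ln_lt_2; lra.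
have ln_u : (0 <= ln u)%R.
  case: (Rle_lt_or_eq_dec 1 u u_ge1) => [lt1u|<-]; last by rewrite ln_1; lra.
  by rewrite -ln_1; apply/Rlt_le/ln_increasing; lra.
have ln8 : ln 8 = (3 * ln 2)%R by rewrite (_ : 8 = 2 ^ 3)%R ?ln_pow /=; lra.
have ln_8u : ln (8 * u) = (3 * ln 2 + ln u)%R.
  by rewrite (ln_mult 8 u) ?ln8; lra.
apply: (Rmult_le_reg_r (ln 2)) => //.
rewrite /log2 /Rdiv Rmult_assoc Rinv_l ?Rmult_1_r ?ln_8u; lra.
Qed.

Lemma mistake_bound_ge (m k : nat) : (INR (288 * UB m k) <= mistake_bound m k)%R.
Proof.
rewrite /mistake_bound mult_INR (INR_IZR_INZ 288) /=.
have [->|UB_gt0] := posnP (UB m k); first by rewrite /=; lra.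
have u_ge1 : (1 <= INR (UB m k))%R by apply: (le_INR 1); apply/leP.
have L_ge3 := log2_8_ge3 u_ge1.
move: u_ge1 L_ge3; set u := INR _; set L := log2 _ => u_ge1 L_ge3.
have L2_ge9 : (9 <= L * L)%R by nra.
have : (0 <= u * (L * L - 9))%R by apply: Rmult_le_pos; lra.
lra.
Qed.

Theorem theorem2 (X : Type) (Y : finType) :
  exists A : learner X Y,
    (forall (x0 : X) (y0 : Y) (s : seq (srnd X Y)),
        valid_run x0 y0 (run A x0 y0 s)) /\
    (forall (Phi : feature X -> Prop), closed_neg Phi ->
     forall (m k : nat) (x0 : X) (y0 : Y) (s : seq (srnd X Y)),
       consistent Phi m k x0 y0 (run A x0 y0 s) ->
       (INR (num_mistakes (run A x0 y0 s)) <= mistake_bound m k)%R).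
Proof.
exists dff_learner; split => [x0 y0 s | Phi _ m k x0 y0 s].
  exact: dff_learner_valid.
case=> [comp [lab [G [phi [[compG sep] [E [size_E [_ conf_E]]]]]]]].
have phi_sep i j : lab i != lab j ->
    (forall x, G x = i -> phi i j x) /\ (forall x, G x = j -> ~~ phi i j x).
  move=> /sep[_ phi_i phi_j _]; split => x Gx;
    [apply: phi_i | apply/negbT/phi_j]; rewrite -Gx; exact: compG.
have K_le : count (predC (conformsb lab G phi)) (run dff_learner x0 y0 s) <= k.
  apply: leq_trans size_E; apply: (count_le_positions (d := Entry x0 y0 y0 0 x0 None)).
  move=> t lt_t /=; apply: contraR => /conf_E conf_t; exact/asboolP/conf_t.
apply: Rle_trans (mistake_bound_ge m k); apply/le_INR/leP.
exact: dff_mistakes_le phi_sep _ _ _ _ K_le.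
Qed.
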